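(* Consider Cobb--Douglas exchange economies with $n$ agents and $m$ commodities such that every agent owns a strictly positive amount of every commodity ($e_{ij}>0$ for all $i\in[n]$, $j\in[m]$) and strong competitiveness holds both for the truthful and for the misreported profile (for every commodity $j$ there is an agent $k$ with $\alpha_{kj}>0$, and for every $j$ there is an agent $k$ with $\alpha'_{kj}>0$, where $\alpha'$ denotes the reported exponents when agent $i$ misreports). Then the incentive ratio is at most $m$: for every such economy, agent $i$ and misreport $u_i'$, $$\frac{u_i(x_i')}{u_i(x_i)}\le m,$$ where $x$ and $x'$ are the competitive equilibrium allocations under truthful reporting and under the misreport, respectively.
   Context: An exchange economy with $n$ agents and $m$ commodities is a tuple $((u_i)_{i=1}^n,(e_i)_{i=1}^n)$, with $u_i:\mathbb{R}_+^m\to\mathbb{R}$ and endowments $e_i\in\mathbb{R}_+^m$; without loss of generality $e_i\in[0,1]^m$ and $\sum_i e_{ij}=1$ for each $j$. Cobb--Douglas utilities are $u_k(x)=\prod_{j=1}^m x_j^{\alpha_{kj}}$ with $0\le\alpha_{kj}\le1$, $\sum_j\alpha_{kj}=1$. Given prices $p$, agent $k$'s demand is the set of maximizers of $u_k(x_k)$ subject to $p\cdot x_k\le p\cdot e_k$, $x_k\ge0$. A competitive equilibrium is a pair $(p,x)$ with markets clearing and each $x_k$ in agent $k$'s demand at $p$; under the stated assumptions the equilibrium price is unique (up to scaling) and positive. In the misreported scenario agent $i$ reports a Cobb--Douglas utility $u_i'$ with exponents $\alpha_i'$ while all others report truthfully, yielding equilibrium allocation $x'$, and $x_i'$ is evaluated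 with the true $u_i$. The incentive ratio is the supremum of $u_i(x_i')/u_i(x_i)$ over all such economies, agents and misreports. *)

From HB Require Import structures.
From mathcomp Require Import all_boot all_order all_algebra.
From mathcomp Require Import all_classical all_reals exp.
Set Implicit Arguments. Unset Strict Implicit. Unset Printing Implicit Defensive.
Import Order.TTheory GRing.Theory Num.Theory.
Local Open Scope ring_scope.

(* Cobb-Douglas utility with exponent vector a: prod_j x_j^(a_j)
   (powR convention: 0 `^ 0 = 1). *)
Definition cobb_douglas (R : realType) (m : nat) (a : 'I_m -> R) (x : 'I_m -> R) : R :=
  \prod_(j < m) (x j `^ a j).

Definition cd_exponents (R : realType) (m : nat) (a : 'I_m -> R) : Prop :=
  (forall j, 0 <= a j <= 1) /\ \sum_(j < m) a j = 1.

Definition budget_set (R : realType) (m : nat) (p w y : 'I_m -> R) : Prop :=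
  (forall j, 0 <= y j) /\ \sum_(j < m) p j * y j <= \sum_(j < m) p j * w j.

Definition in_demand (R : realType) (m : nat) (u : ('I_m -> R) -> R)
    (p w y : 'I_m -> R) : Prop :=
  budget_set p w y /\ forall z, budget_set p w z -> u z <= u y.

Definition competitive_equilibrium (R : realType) (n m : nat)
    (alpha : 'I_n -> 'I_m -> R) (e : 'I_n -> 'I_m -> R)
    (p : 'I_m -> R) (x : 'I_n -> 'I_m -> R) : Prop :=
  [/\ (forall j, 0 <= p j), (exists j, p j != 0),
      (forall j, \sum_(k < n) x k j = \sum_(k < n) e k j)
    & forall k, in_demand (cobb_douglas (alpha k)) p (e k) (x k)].

Definition strongly_competitive (R : realType) (n m : nat)
    (alpha : 'I_n -> 'I_m -> R) : Prop :=
  forall j : 'I_m, exists k : 'I_n, 0 < alpha k j.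

Definition misreport (R : realType) (n m : nat) (alpha : 'I_n -> 'I_m -> R)
    (i : 'I_n) (a' : 'I_m -> R) : 'I_n -> 'I_m -> R :=
  fun k => if k == i then a' else alpha k.

From HB Require Import structures.
From mathcomp Require Import all_boot all_order all_algebra.
From mathcomp Require Import all_classical all_reals exp.
From mathcomp Require Import ring lra.
(* At Cobb-Douglas equilibrium prices every agent k spends the share
   alpha k l of her income p.e_k on commodity l, so the prices solve the
   linear system p_l = sum_k alpha_kl (p.e_k).  Comparing this system for the
   truthful and the misreported exponents, after rescaling the two price
   vectors to agree at a commodity j, the positive parts of the income and
   price differences balance each other except for agent i's own term; this
   shows p_j x'_ij <= p.e_i for every j.  Hence x'_i / m is affordable at p,
   and as Cobb-Douglas utilities are homogeneous of degree one,
   u_i(x'_i) = m u_i(x'_i / m) <= m u_i(x_i). *)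

Set Implicit Arguments. Unset Strict Implicit. Unset Printing Implicit Defensive.
Import Order.TTheory GRing.Theory Num.Theory.
Local Open Scope ring_scope.

Definition cost (R : pzSemiRingType) (m : nat) (p y : 'I_m -> R) : R :=
  \sum_(l < m) p l * y l.

Lemma cost_gt0 (R : realDomainType) m (p w : 'I_m -> R) :
  (0 < m)%N -> (forall l, 0 < p l) -> (forall l, 0 < w l) -> 0 < cost p w.
Proof.
move=> m_gt0 p_gt0 w_gt0; rewrite /cost (bigD1 (Ordinal m_gt0)) //=.
by rewrite ltr_wpDr ?mulr_gt0 // sumr_ge0 // => l _; rewrite mulr_ge0 // ltW.
Qed.

Lemma ln_prod (R : realType) (I : Type) (s : seq I) (F : I -> R) :
  (forall x, 0 < F x) -> ln (\prod_(x <- s) F x) = \sum_(x <- s) ln (F x).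
Proof.
move=> F_gt0; elim: s => [|a s IH]; first by rewrite !big_nil ln1.
by rewrite !big_cons lnM ?IH // posrE ?F_gt0 // prodr_gt0.
Qed.

Lemma powR_sum (R : realType) m (c : R) (a : 'I_m -> R) : 0 < c ->
  c `^ (\sum_(l < m) a l) = \prod_(l < m) c `^ a l.
Proof.
move=> c_gt0; apply: (big_rec2 (fun s t => c `^ s = t)) => [|l s t _ <-].
  by rewrite powRr0.
by rewrite powRD // (gt_eqF c_gt0) implybT.
Qed.

Lemma ln_le_subr1_sqr (R : realType) (t : R) : 0 < t ->
  ln t <= t - 1 - (Num.sqrt t - 1) ^+ 2.
Proof.
move=> t_gt0; set s := Num.sqrt t.
have s_gt0 : 0 < s by rewrite sqrtr_gt0.
have -> : t = s ^+ 2 by rewrite sqr_sqrtr // ltW.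
have ln_s : ln s <= s - 1 by rewrite -[s in ln s](subrK 1) addrC le_ln1Dx // ltrBrDl addrN.
by rewrite lnXn // mulr2n (_ : _ - _ - _ = (s - 1) + (s - 1)); [apply: lerD | ring].
Qed.

Section CobbDouglasUtility.
Variables (R : realType) (m : nat) (a : 'I_m -> R).

Lemma cd_exponents_ge0 : cd_exponents a -> forall l, 0 <= a l.
Proof. by case=> a01 _ l; case/andP: (a01 l). Qed.

Lemma cd_exponents_dim_gt0 : cd_exponents a -> (0 < m)%N.
Proof.
by case: m a => // a0 [_]; rewrite big_ord0 => /eqP; rewrite eq_sym oner_eq0.
Qed.

Lemma cobb_douglas_gt0 (y : 'I_m -> R) :
  (forall l, a l != 0 -> 0 < y l) -> 0 < cobb_douglas a y.
Proof.
move=> y_gt0; apply: prodr_gt0 => l _.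
by have [->|/y_gt0/powR_gt0] := eqVneq (a l) 0; [rewrite powRr0|].
Qed.

Lemma cobb_douglas_gt0_support (y : 'I_m -> R) l :
  0 < cobb_douglas a y -> a l != 0 -> y l != 0.
Proof.
move=> uy a_l; apply: contraTneq uy => y_l.
by rewrite /cobb_douglas (bigD1 l) //= y_l powR0 // mul0r ltxx.
Qed.

Lemma ln_cobb_douglas (y : 'I_m -> R) :
  (forall l, a l != 0 -> 0 < y l) ->
  ln (cobb_douglas a y) = \sum_(l < m) a l * ln (y l).
Proof.
move=> y_gt0; rewrite /cobb_douglas ln_prod => [|l].
  by apply: eq_bigr => l _; rewrite ln_powR.
by have [->|/y_gt0/powR_gt0] := eqVneq (a l) 0; [rewrite powRr0|].
Qed.

Lemma cobb_douglas_homogeneous (c : R) (y : 'I_m -> R) :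
  \sum_(l < m) a l = 1 -> 0 < c -> (forall l, 0 <= y l) ->
  cobb_douglas a (fun l => c * y l) = c * cobb_douglas a y.
Proof.
move=> a_sum c_gt0 y_ge0; rewrite /cobb_douglas.
rewrite (eq_bigr (fun l => c `^ a l * y l `^ a l)) => [|l _]; last first.
  by rewrite powRM // ltW.
by rewrite big_split /= -powR_sum // a_sum powRr1 // ltW.
Qed.

Lemma cobb_douglas_lt_update (y : 'I_m -> R) (j : 'I_m) (t : R) :
  0 < a j -> 0 <= y j -> y j < t -> 0 < cobb_douglas a y ->
  cobb_douglas a y < cobb_douglas a (fun l => if l == j then t else y l).
Proof.
move=> a_j y_j y_lt uy; rewrite /cobb_douglas (bigD1 j) //= [X in _ < X](bigD1 j) //=.
rewrite eqxx [in X in _ < X](eq_bigr (fun l => y l `^ a l)) => [|l /negbTE -> //].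
set P := \prod_(l | l != j) _.
have P_gt0 : 0 < P.
  rewrite lt_neqAle prodr_ge0 ?andbT => [|l _]; last exact: powR_ge0.
  by apply: contraTneq uy => P0; rewrite /cobb_douglas (bigD1 j) //= -/P -P0 mulr0 ltxx.
by rewrite ltr_pM2r // gt0_ltr_powR // nnegrE (le_trans y_j) // ltW.
Qed.

End CobbDouglasUtility.

Lemma budget_set_shrink (R : realType) m (p w y : 'I_m -> R) :
  (0 < m)%N -> (forall l, 0 <= y l) -> (forall l, p l * y l <= cost p w) ->
  budget_set p w (fun l => m%:R^-1 * y l).
Proof.
move=> m_gt0 y_ge0 y_cost; split=> [l|]; first by rewrite mulr_ge0 ?invr_ge0.
rewrite (eq_bigr (fun l => m%:R^-1 * (p l * y l))) => [|l _]; last by rewrite mulrCA.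
rewrite -mulr_sumr ler_pdivrMl ?ltr0n //.
by apply: le_trans (ler_sum _ (fun l _ => y_cost l)) _; rewrite sumr_const card_ord mulr_natl.
Qed.

Lemma in_demand_price_gt0 (R : realType) m (a p w y : 'I_m -> R) (j : 'I_m) :
  (forall l, 0 <= p l) -> 0 < a j -> (forall l, 0 <= w l) -> 0 < cobb_douglas a w ->
  in_demand (cobb_douglas a) p w y -> 0 < p j.
Proof.
move=> p_ge0 a_j w_ge0 uw [[y_ge0 y_cost] y_max].
rewrite lt_neqAle p_ge0 andbT; apply/eqP => p_j.
have uy : 0 < cobb_douglas a y by apply: lt_le_trans uw (y_max _ (conj w_ge0 _)).
have : cobb_douglas a (fun l => if l == j then y j + 1 else y l) <= cobb_douglas a y.
  apply: y_max; split=> [l|]; first by case: eqP => _; rewrite ?addr_ge0.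
  apply: le_trans y_cost; rewrite (eq_bigr (fun l => p l * y l)) // => l _.
  by case: eqP => [->|//]; rewrite -p_j !mul0r.
by rewrite leNgt cobb_douglas_lt_update ?ltrDl.
Qed.

Definition cd_demand (R : realType) m (a p w : 'I_m -> R) (l : 'I_m) : R :=
  a l * cost p w / p l.

Section CobbDouglasDemand.
Variables (R : realType) (m : nat) (a p w : 'I_m -> R).
Hypotheses (a_cd : cd_exponents a) (p_gt0 : forall l, 0 < p l) (w_cost_gt0 : 0 < cost p w).

Let a_ge0 := cd_exponents_ge0 a_cd.
Let z := cd_demand a p w.

Lemma cd_demand_spending l : p l * z l = a l * cost p w.
Proof. by rewrite /z /cd_demand mulrC divfK // gt_eqF. Qed.

Lemma cd_demand_gt0 l : a l != 0 -> 0 < z l.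
Proof. by move=> a_l; rewrite divr_gt0 // mulr_gt0 // lt_neqAle eq_sym a_l a_ge0. Qed.

Lemma cd_demand_budget : budget_set p w z.
Proof.
split=> [l|]; first by rewrite divr_ge0 ?mulr_ge0 // ltW.
rewrite (eq_bigr _ (fun l _ => cd_demand_spending l)) -mulr_suml.
by case: a_cd => _ ->; rewrite mul1r.
Qed.

(* Weighted AM-GM with the defect term of [ln_le_subr1_sqr]: the defect is
   what forces a utility maximiser to coincide with [cd_demand]. *)
Lemma cobb_douglas_log_gap (y : 'I_m -> R) :
  (forall l, 0 <= y l) -> (forall l, a l != 0 -> 0 < y l) ->
  ln (cobb_douglas a y) - ln (cobb_douglas a z) <=
  cost p y / cost p w - 1 - \sum_l a l * (Num.sqrt (y l / z l) - 1) ^+ 2.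
Proof.
move=> y_ge0 y_gt0; rewrite !ln_cobb_douglas //; last exact: cd_demand_gt0.
have [_ a_sum] := a_cd.
rewrite -sumrB -{1}a_sum [cost p y]/cost mulr_suml -!sumrB; apply: ler_sum => l _.
have [->|a_l] := eqVneq (a l) 0.
  by rewrite !mul0r !subr0 divr_ge0 ?mulr_ge0 // ltW.
have [y_l z_l] := (y_gt0 l a_l, cd_demand_gt0 a_l).
have -> : p l * y l / cost p w = a l * (y l / z l).
  rewrite /z /cd_demand; field.
  by rewrite (gt_eqF (p_gt0 l)) (gt_eqF w_cost_gt0) a_l.
rewrite -mulrBr -ln_div ?posrE //.
have := ler_wpM2l (a_ge0 l) (ln_le_subr1_sqr (divr_gt0 y_l z_l)).
by rewrite !mulrBr mulr1.
Qed.

Lemma in_demand_cobb_douglas (y : 'I_m -> R) :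
  in_demand (cobb_douglas a) p w y -> forall l, p l * y l = a l * cost p w.
Proof.
move=> [[y_ge0 y_cost] y_max].
have uz_gt0 : 0 < cobb_douglas a z := cobb_douglas_gt0 cd_demand_gt0.
have uz_le := y_max _ cd_demand_budget.
have y_gt0 l : a l != 0 -> 0 < y l.
  move=> a_l; rewrite lt_neqAle eq_sym y_ge0 andbT.
  exact: cobb_douglas_gt0_support (lt_le_trans uz_gt0 uz_le) a_l.
have gap := cobb_douglas_log_gap y_ge0 y_gt0.
set Q := \sum_(l < m) _ in gap.
have ln_ge : 0 <= ln (cobb_douglas a y) - ln (cobb_douglas a z).
  by rewrite subr_ge0 ler_ln ?posrE ?(lt_le_trans uz_gt0).
have Q_ge0 : 0 <= Q by apply: sumr_ge0 => l _; rewrite mulr_ge0 ?sqr_ge0.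
have cost_le : cost p y / cost p w <= 1 by rewrite ler_pdivrMr // mul1r.
have Q0 : Q = 0 by lra.
have /divr1_eq y_cost_eq : cost p y / cost p w = 1 by lra.
have y_eq_z l : a l != 0 -> y l = z l.
  move=> a_l; have /eqP := @psumr_eq0P _ _ _ _ (fun k _ => mulr_ge0 (a_ge0 k) (sqr_ge0 _)) Q0 l isT.
  rewrite mulf_eq0 (negbTE a_l) sqrf_eq0 subr_eq0 => /eqP sqrt1.
  have yz_ge0 : 0 <= y l / z l by rewrite divr_ge0 // ltW // cd_demand_gt0.
  by apply: divr1_eq; rewrite -[LHS]sqr_sqrtr // sqrt1 expr1n.
have gap0 : \sum_l (p l * y l - a l * cost p w) = 0.
  by rewrite sumrB -mulr_suml; case: a_cd => _ ->; rewrite mul1r -/(cost p y) y_cost_eq subrr.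
move=> l; apply/eqP; rewrite -subr_eq0; apply/eqP; apply: (psumr_eq0P _ gap0) => // k _.
have [->|a_k] := eqVneq (a k) 0; first by rewrite mul0r subr0 mulr_ge0 // ltW.
by rewrite y_eq_z // cd_demand_spending subrr.
Qed.

End CobbDouglasDemand.

Section PositivePartFlow.
Variables (R : realFieldType) (n m : nat).
Variables (E A : 'I_n -> 'I_m -> R) (d : 'I_n -> R) (g : 'I_m -> R) (c : R) (i : 'I_n).
Hypotheses (E_ge0 : forall k l, 0 <= E k l) (E_col : forall l, \sum_k E k l <= 1).
Hypotheses (A_ge0 : forall k l, 0 <= A k l) (A_row : forall k, \sum_l A k l <= 1).
Hypotheses (d_def : forall k, d k = \sum_l E k l * g l) (c_ge0 : 0 <= c).
Hypothesis g_le : forall l, g l <= \sum_k A k l * d k + c * A i l.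

(* Positive parts of d are bounded by those of g since the columns of E have
   mass at most 1; these flow back into d through A, and only the external
   source c * A i escapes the balance, which bounds d i. *)
Let mass k := \sum_(l | 0 < g l) A k l.

Lemma sum_pos_part_le : \sum_k Num.max (d k) 0 <= \sum_(l | 0 < g l) g l.
Proof.
apply: (@le_trans _ _ (\sum_k \sum_(l | 0 < g l) E k l * g l)).
  apply: ler_sum => k _; rewrite ge_max sumr_ge0 => [|l /ltW]; last exact: mulr_ge0.
  rewrite d_def (bigID (fun l => 0 < g l)) /= gerDl andbT.
  by apply: sumr_le0 => l; rewrite -leNgt; apply: mulr_ge0_le0.
rewrite exchange_big /=; apply: ler_sum => l /ltW g_ge0.
by rewrite -mulr_suml ler_piMl.
Qed.

Lemma sum_pos_part_flow :
  \sum_(l | 0 < g l) g l <= \sum_k mass k * Num.max (d k) 0 + c * mass i.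
Proof.
apply: (@le_trans _ _ (\sum_(l | 0 < g l) (\sum_k A k l * Num.max (d k) 0 + c * A i l))).
  apply: ler_sum => l _; apply: le_trans (g_le l) _; rewrite lerD2r.
  by apply: ler_sum => k _; rewrite ler_wpM2l // le_max lexx.
rewrite big_split /= exchange_big /= -mulr_sumr.
by under [in X in _ <= X + _]eq_bigr do rewrite /mass mulr_suml.
Qed.

Lemma pos_part_flow_bound j : g j <= 0 -> A i j * d i <= c * (1 - A i j).
Proof.
move=> g_j.
have mass_le1 k : mass k <= 1.
  apply: le_trans (A_row k); rewrite [X in _ <= X](bigID (fun l => 0 < g l)) /= lerDl.
  exact: sumr_ge0.
have mass_i : mass i + A i j <= 1.
  apply: le_trans (A_row i); rewrite [X in _ <= X](bigID (fun l => 0 < g l)) /= lerD2l.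
  by rewrite (bigD1 j) ?ltNge ?g_j //= lerDl sumr_ge0.
have flow : \sum_k Num.max (d k) 0 * (1 - mass k) <= c * mass i.
  under eq_bigr do rewrite mulrBr mulr1 mulrC.
  rewrite sumrB lerBlDr addrC.
  exact: le_trans sum_pos_part_le sum_pos_part_flow.
have flow_i : Num.max (d i) 0 * (1 - mass i) <= c * mass i.
  apply: le_trans flow; rewrite (bigD1 i) //= lerDl.
  by apply: sumr_ge0 => k _; rewrite mulr_ge0 ?le_max ?lexx ?orbT // subr_ge0.
have d_max : d i <= Num.max (d i) 0 by rewrite le_max lexx.
have max_ge0 : 0 <= Num.max (d i) 0 by rewrite le_max lexx orbT.
have A_ij : A i j <= 1 - mass i by lra.
apply: le_trans (ler_wpM2l (A_ge0 i j) d_max) _.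
apply: le_trans (ler_wpM2r max_ge0 A_ij) _; rewrite mulrC.
by apply: le_trans flow_i _; rewrite ler_wpM2l // lerBrDl addrC.
Qed.

End PositivePartFlow.

Lemma misreport_price_bound (R : realFieldType) n m (E A A' : 'I_n -> 'I_m -> R)
    (i : 'I_n) (p p' : 'I_m -> R) :
  (forall k l, 0 <= E k l) -> (forall l, \sum_k E k l <= 1) ->
  (forall l, 0 <= A i l) -> (forall k l, 0 <= A' k l) -> (forall k, \sum_l A' k l <= 1) ->
  (forall k l, k != i -> A' k l = A k l) ->
  (forall l, 0 <= p l) -> (forall l, 0 <= p' l) ->
  (forall l, p l = \sum_k A k l * cost p (E k)) ->
  (forall l, p' l = \sum_k A' k l * cost p' (E k)) ->
  forall j, A' i j * cost p' (E i) * p j <= cost p (E i) * p' j.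
Proof.
move=> E_ge0 E_col A_ge0 A'_ge0 A'_row A'_A p_ge0 p'_ge0 p_eq p'_eq j.
(* Rescale p and p' to agree at j; d and g compare incomes and prices. *)
pose d k := p j * cost p' (E k) - p' j * cost p (E k).
pose g l := p j * p' l - p' j * p l.
pose c := p' j * cost p (E i).
have d_def k : d k = \sum_l E k l * g l.
  by rewrite /d /g /cost !mulr_sumr -sumrB; apply: eq_bigr => l _; ring.
have A'_cost l : \sum_k A' k l * cost p (E k)
                 = \sum_k A k l * cost p (E k) + (A' i l - A i l) * cost p (E i).
  rewrite (bigD1 i) //= [in RHS](bigD1 i) //=.
  by rewrite (eq_bigr (fun k => A k l * cost p (E k))) => [|k /A'_A ->]; first ring.
have g_le l : g l <= \sum_k A' k l * d k + c * A' i l.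
  have -> : \sum_k A' k l * d k
            = p j * \sum_k A' k l * cost p' (E k) - p' j * \sum_k A' k l * cost p (E k).
    by rewrite /d !mulr_sumr -sumrB; apply: eq_bigr => k _; ring.
  rewrite -p'_eq A'_cost -p_eq /g /c.
  have : 0 <= p' j * cost p (E i) * A i l.
    by rewrite !mulr_ge0 // sumr_ge0 // => k _; rewrite mulr_ge0.
  lra.
have c_ge0 : 0 <= c by rewrite mulr_ge0 // sumr_ge0 // => k _; rewrite mulr_ge0.
have g_j : g j <= 0 by rewrite /g mulrC subrr.
have := pos_part_flow_bound E_ge0 E_col A'_ge0 A'_row d_def c_ge0 g_le g_j.
rewrite /d /c; lra.
Qed.

Section CobbDouglasEquilibrium.
Variables (R : realType) (n m : nat) (alpha e : 'I_n -> 'I_m -> R).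
Variables (p : 'I_m -> R) (x : 'I_n -> 'I_m -> R).
Hypotheses (alpha_cd : forall k, cd_exponents (alpha k)) (e_gt0 : forall k j, 0 < e k j).
Hypotheses (e_supply : forall j, \sum_k e k j = 1) (alpha_sc : strongly_competitive alpha).
Hypothesis eq_px : competitive_equilibrium alpha e p x.

Lemma equilibrium_price_gt0 j : 0 < p j.
Proof.
have [p_ge0 _ _ demand] := eq_px; have [k alpha_kj] := alpha_sc j.
apply: in_demand_price_gt0 p_ge0 alpha_kj _ _ (demand k) => [l|]; first exact: ltW.
by apply: cobb_douglas_gt0 => l _; apply: e_gt0.
Qed.

Lemma equilibrium_spending k l : p l * x k l = alpha k l * cost p (e k).
Proof.
have [_ _ _ demand] := eq_px.
have income_gt0 := cost_gt0 (cd_exponents_dim_gt0 (alpha_cd k)) equilibrium_price_gt0 (e_gt0 k).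
exact (in_demand_cobb_douglas (alpha_cd k) equilibrium_price_gt0 income_gt0 (demand k) l).
Qed.

Lemma equilibrium_price_eq l : p l = \sum_k alpha k l * cost p (e k).
Proof.
have [_ _ clearing _] := eq_px.
rewrite -[LHS]mulr1 -(e_supply l) -clearing mulr_sumr.
by apply: eq_bigr => k _; apply: equilibrium_spending.
Qed.

End CobbDouglasEquilibrium.

Lemma misreport_cost_le (R : realType) n m (alpha e : 'I_n -> 'I_m -> R)
    (i : 'I_n) (a' : 'I_m -> R) p (x : 'I_n -> 'I_m -> R) p' (x' : 'I_n -> 'I_m -> R) :
  (forall k, cd_exponents (alpha k)) -> (forall k j, 0 < e k j) ->
  (forall j, \sum_k e k j = 1) -> cd_exponents a' ->
  strongly_competitive alpha -> strongly_competitive (misreport alpha i a') ->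
  competitive_equilibrium alpha e p x ->
  competitive_equilibrium (misreport alpha i a') e p' x' ->
  forall j, p j * x' i j <= cost p (e i).
Proof.
move=> alpha_cd e_gt0 e_supply a'_cd alpha_sc alpha'_sc eq_px eq_px' j.
set alpha' := misreport alpha i a' in alpha'_sc eq_px' *.
have alpha'_cd k : cd_exponents (alpha' k) by rewrite /alpha' /misreport; case: eqP.
have p_gt0 := equilibrium_price_gt0 e_gt0 alpha_sc eq_px.
have p'_gt0 := equilibrium_price_gt0 e_gt0 alpha'_sc eq_px'.
rewrite -(ler_pM2r (p'_gt0 j)) mulrAC -mulrA.
rewrite (equilibrium_spending alpha'_cd e_gt0 alpha'_sc eq_px') mulrC.
apply: misreport_price_bound.
- by move=> k l; apply/ltW/e_gt0.
- by move=> l; rewrite e_supply.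
- exact: cd_exponents_ge0.
- by move=> k; apply: cd_exponents_ge0.
- by move=> k; case: (alpha'_cd k) => _ ->.
- by move=> k l /negbTE; rewrite /alpha' /misreport => ->.
- by move=> l; apply/ltW/p_gt0.
- by move=> l; apply/ltW/p'_gt0.
- exact: equilibrium_price_eq alpha_cd e_gt0 e_supply alpha_sc eq_px.
- exact: equilibrium_price_eq alpha'_cd e_gt0 e_supply alpha'_sc eq_px'.
Qed.

Theorem theorem1 (R : realType) (n m : nat)
    (alpha : 'I_n -> 'I_m -> R) (e : 'I_n -> 'I_m -> R)
    (i : 'I_n) (a' : 'I_m -> R)
    (p : 'I_m -> R) (x : 'I_n -> 'I_m -> R)
    (p' : 'I_m -> R) (x' : 'I_n -> 'I_m -> R) :
  (forall k, cd_exponents (alpha k)) ->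
  (forall k j, 0 < e k j) ->
  (forall j, \sum_(k < n) e k j = 1) ->
  cd_exponents a' ->
  strongly_competitive alpha ->
  strongly_competitive (misreport alpha i a') ->
  competitive_equilibrium alpha e p x ->
  competitive_equilibrium (misreport alpha i a') e p' x' ->
  cobb_douglas (alpha i) (x' i) <= m%:R * cobb_douglas (alpha i) (x i).
Proof.
move=> alpha_cd e_gt0 e_supply a'_cd alpha_sc alpha'_sc eq_px eq_px'.
have x'_cost := misreport_cost_le alpha_cd e_gt0 e_supply a'_cd alpha_sc alpha'_sc eq_px eq_px'.
have m_gt0 := cd_exponents_dim_gt0 (alpha_cd i).
have [_ _ _ demand] := eq_px; have [_ _ _ demand'] := eq_px'.
have [[x'_ge0 _] _] := demand' i.
have := (demand i).2 _ (budget_set_shrink m_gt0 x'_ge0 x'_cost).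
have [_ alpha_sum] := alpha_cd i.
by rewrite cobb_douglas_homogeneous ?invr_gt0 ?ltr0n // ler_pdivrMl ?ltr0n.
Qed.
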